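(* Let $\Sigma$ be a set containing $0$, $(\Gamma,\oplus)$ an abelian group, and $f:\Sigma^n\to\Gamma$. Suppose $f(\bar x)=\bigoplus_{i=1}^k f_i(\bar x_{K_i})=\bigoplus_{j=1}^l g_j(\bar x_{L_j})$ for all $\bar x\in\Sigma^n$, where $\{K_1,\ldots,K_k\}$ and $\{L_1,\ldots,L_l\}$ are partitions of $[n]$ into nonempty sets and every $f_i$ and every $g_j$ has non-separable arguments. Then $\{K_1,\ldots,K_k\}=\{L_1,\ldots,L_l\}$ (so $k=l$), and whenever $K_i=L_j$ the function $f_i\ominus g_j$ is constant.
   Context: $[n]=\{1,\ldots,n\}$; for $M=\{i_1<\cdots<i_m\}\subseteq[n]$ and $\bar x=(x_1,\ldots,x_n)$, $\bar x_M=(x_{i_1},\ldots,x_{i_m})$. A function $h:\Sigma^m\to\Gamma$ has $P$-separable arguments (for a partition $P=\{P_1,\ldots,P_p\}$ of $[m]$ into nonempty sets) if there exist functions $h_j:\Sigma^{|P_j|}\to\Gamma$ with $h(\bar x)=h_1(\bar x_{P_1})\oplus\cdots\oplus h_p(\bar x_{P_p})$ for all $\bar x$; $h$ has non-separable arguments if $h$ has $P$-separable arguments only for the one-block partition $P=\{[m]\}$. *)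

From HB Require Import structures.
From mathcomp Require Import all_boot all_order all_algebra.
Set Implicit Arguments. Unset Strict Implicit. Unset Printing Implicit Defensive.
Import GRing.Theory.
Local Open Scope ring_scope.

(* Sigma^m is modelled as m.-tuple Sigma; indices [m] = {1..m} as 'I_m = {0..m-1}. *)

(* x_M : the restriction of x to the coordinates in M, listed in increasing order
   (enum of a set of ordinals is increasing). *)
Definition restr (S : Type) (m : nat) (x : m.-tuple S) (M : {set 'I_m})
  : #|M|.-tuple S := [tuple tnth x (enum_val i) | i < #|M|].

Definition nonempty_partition (m : nat) (P : {set {set 'I_m}}) : bool :=
  partition P [set: 'I_m] && (set0 \notin P).

Definition P_separable (S : Type) (G : zmodType) (m : nat)
  (h : m.-tuple S -> G) (P : {set {set 'I_m}}) : Prop :=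
  exists hs : forall B : {set 'I_m}, #|B|.-tuple S -> G,
    forall x : m.-tuple S, h x = \sum_(B in P) hs B (restr x B).

Definition non_separable (S : Type) (G : zmodType) (m : nat)
  (h : m.-tuple S -> G) : Prop :=
  forall P : {set {set 'I_m}}, nonempty_partition P ->
    P_separable h P -> P = [set [set: 'I_m]].

(* Extending a tuple on a block B by [zero] outside B isolates one summand of
   each decomposition: for a block B of K, fs B y equals, up to a constant, the
   sum over L evaluated at the zero extension of y.  If B met a block C of L
   without lying inside it, the summand of C and the sum of the remaining
   summands would split fs B along the proper nonempty set of positions of B
   falling into C, contradicting non-separability.  Hence every block of K lies
   in a block of L and vice versa, which forces K = L; the constant difference
   of fs B and gs B is read off the same identity. *)

From HB Require Import structures.
From mathcomp Require Import all_boot all_order all_algebra.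
Import GRing.Theory.
Local Open Scope ring_scope.

Section ZeroExtension.
Context {S : Type} (zero : S) {m : nat}.

Definition zero_ext {B : {set 'I_m}} (y : #|B|.-tuple S) : m.-tuple S :=
  [tuple if j \in B then nth zero y (index j (enum B)) else zero | j < m].

Lemma tnth_zero_ext_in {B : {set 'I_m}} (y : #|B|.-tuple S) {j} (jB : j \in B) :
  tnth (zero_ext y) j = tnth y (enum_rank_in jB j).
Proof.
rewrite tnth_mktuple jB (tnth_nth zero); congr nth.
rewrite enum_rank_in.unlock insubdK //.
by rewrite cardE unfold_in /= index_mem mem_enum.
Qed.

Lemma tnth_zero_ext_out {B : {set 'I_m}} (y : #|B|.-tuple S) {j} :
  j \notin B -> tnth (zero_ext y) j = zero.
Proof. by rewrite tnth_mktuple => /negbTE ->. Qed.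

Lemma eq_restr {x x' : m.-tuple S} {B : {set 'I_m}} :
  {in B, forall j, tnth x j = tnth x' j} -> restr x B = restr x' B.
Proof.
move=> eq_xx'; apply: eq_from_tnth => i; rewrite !tnth_mktuple.
exact/eq_xx'/enum_valP.
Qed.

Lemma restr_zero_ext {B : {set 'I_m}} (y : #|B|.-tuple S) :
  restr (zero_ext y) B = y.
Proof.
apply: eq_from_tnth => i; rewrite tnth_mktuple.
by rewrite (tnth_zero_ext_in _ (enum_valP i)) enum_valK_in.
Qed.

Lemma tnth_zero_ext_restr (x : m.-tuple S) {B : {set 'I_m}} {j} :
  j \in B -> tnth (zero_ext (restr x B)) j = tnth x j.
Proof. by move=> jB; rewrite (tnth_zero_ext_in _ jB) tnth_mktuple enum_rankK_in. Qed.

Lemma restr_zero_ext_disjoint {B C : {set 'I_m}} (y : #|B|.-tuple S) :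
  [disjoint B & C] -> restr (zero_ext y) C = restr [tuple zero | _ < m] C.
Proof.
move=> dBC; apply: eq_restr => j jC.
by rewrite tnth_zero_ext_out ?tnth_mktuple ?(disjointFl dBC).
Qed.

Lemma eq_restr_zero_ext {B C : {set 'I_m}} {y y' : #|B|.-tuple S} :
  (forall i, enum_val i \in C -> tnth y i = tnth y' i) ->
  restr (zero_ext y) C = restr (zero_ext y') C.
Proof.
move=> eq_yy'; apply: eq_restr => j jC.
have [jB | jNB] := boolP (j \in B); last by rewrite !tnth_zero_ext_out.
by rewrite !(tnth_zero_ext_in _ jB); apply: eq_yy'; rewrite enum_rankK_in.
Qed.

Lemma sum_restr_zero_ext {G : zmodType} {K : {set {set 'I_m}}}
    (F : forall C : {set 'I_m}, #|C|.-tuple S -> G) {B : {set 'I_m}}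
    (y : #|B|.-tuple S) :
  trivIset K -> B \in K ->
  \sum_(C in K) F C (restr (zero_ext y) C) =
  F B y + \sum_(C in K | C != B) F C (restr [tuple zero | _ < m] C).
Proof.
move=> /trivIsetP tK BK; rewrite (bigD1 B) //= restr_zero_ext; congr (_ + _).
apply: eq_bigr => C /andP[CK CB].
by rewrite restr_zero_ext_disjoint // tK // eq_sym.
Qed.

End ZeroExtension.

Section Partitions.
Context {m : nat}.
Implicit Types (K : {set {set 'I_m}}) (B C D : {set 'I_m}).

Lemma nonempty_partition_pair {D} :
  D != set0 -> D != setT -> nonempty_partition [set D; ~: D].
Proof.
move=> D0 DT.
have CD0 : ~: D != set0 by apply: contra DT => /eqP CD; rewrite -[D]setCK CD setC0.
have DCD : D \notin [set ~: D].
  by case/set0Pn: D0 => j jD; rewrite inE; apply/eqP => /setP/(_ j); rewrite inE jD.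
rewrite /nonempty_partition /partition /cover big_setU1 //= big_set1 setUCr eqxx.
rewrite !inE negb_or !(eq_sym set0) D0 CD0 !andbT.
apply/trivIsetP => A A'; rewrite !inE => /orP[]/eqP-> /orP[]/eqP->;
  by rewrite ?eqxx // => _; rewrite disjoints_subset ?setCK subxx.
Qed.

Lemma partition_block_sub {K B C} :
  nonempty_partition K -> B \in K -> C \in K -> B \subset C -> B = C.
Proof.
case/andP=> /and3P[_ /trivIsetP tK _] K0 BK CK BC; apply/eqP; apply: contraT => BC'.
have /set0Pn [j jB] : B != set0 by apply: contraNneq K0 => <-.
by have := disjointFr (tK _ _ BK CK BC') jB; rewrite (subsetP BC).
Qed.

End Partitions.

Section NonSeparable.
Context {S : Type} (zero : S) {G : zmodType} {m : nat}.

Lemma not_non_separable_split {h : m.-tuple S -> G} (u v : m.-tuple S -> G)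
    {D : {set 'I_m}} :
  D != set0 -> D != setT ->
  (forall x, h x = u x + v x) ->
  (forall x x', {in D, forall j, tnth x j = tnth x' j} -> u x = u x') ->
  (forall x x', {in ~: D, forall j, tnth x j = tnth x' j} -> v x = v x') ->
  ~ non_separable h.
Proof.
move=> D0 DT huv uD vD hNS.
have CDD : ~: D != D.
  by case/set0Pn: D0 => j jD; apply/eqP => /setP/(_ j); rewrite inE jD.
have sepD : P_separable h [set D; ~: D].
  exists (fun C z => if C == D then u (zero_ext zero z) else v (zero_ext zero z)) => x.
  rewrite big_setU1 /=; last by rewrite inE eq_sym.
  rewrite big_set1 eqxx (negbTE CDD) huv.
  by congr (_ + _); [apply: uD | apply: vD] => j jC; rewrite tnth_zero_ext_restr.
have /setP/(_ D) := hNS _ (nonempty_partition_pair D0 DT) sepD.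
by rewrite !inE eqxx => /esym/eqP DT'; rewrite DT' eqxx in DT.
Qed.

End NonSeparable.

Section TwoDecompositions.
Context {S : Type} (zero : S) {G : zmodType} {n : nat}.
Context {f : n.-tuple S -> G} {K L : {set {set 'I_n}}}.
Context {fs gs : forall B : {set 'I_n}, #|B|.-tuple S -> G}.
Hypotheses (partK : nonempty_partition K) (partL : nonempty_partition L).
Hypothesis fsNS : forall B, B \in K -> non_separable (fs B).
Hypotheses (f_fs : forall x, f x = \sum_(B in K) fs B (restr x B))
           (f_gs : forall x, f x = \sum_(B in L) gs B (restr x B)).

Let zero_tuple := [tuple zero | _ < n].

Lemma block_eq_sum_zero_ext B : B \in K ->
  forall y : #|B|.-tuple S, fs B y =
    \sum_(C in L) gs C (restr (zero_ext zero y) C)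
    - \sum_(C in K | C != B) fs C (restr zero_tuple C).
Proof.
case/andP: partK => /and3P[_ tK _] _ BK y.
by rewrite -f_gs f_fs sum_restr_zero_ext // addrK.
Qed.

Lemma block_sub_meeting {B C} :
  B \in K -> C \in L -> ~~ [disjoint B & C] -> B \subset C.
Proof.
case/andP: partL => /and3P[_ tL _] _ BK CL meetBC.
apply/negPn/negP => notBC.
pose D := [set i : 'I_#|B| | enum_val i \in C].
have D0 : D != set0.
  case/pred0Pn: meetBC => j /andP[jB jC].
  by apply/set0Pn; exists (enum_rank_in jB j); rewrite inE enum_rankK_in.
have DT : D != setT.
  apply: contra notBC => /eqP DT; apply/subsetP => j jB.
  by have := in_setT (enum_rank_in jB j); rewrite -DT inE enum_rankK_in.
pose c := \sum_(C' in K | C' != B) fs C' (restr zero_tuple C').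
apply: (not_non_separable_split zero
  (fun y => gs C (restr (zero_ext zero y) C) - c)
  (fun y => \sum_(C' in L | C' != C) gs C' (restr (zero_ext zero y) C'))
  D0 DT _ _ _ (fsNS _ BK)).
- by move=> y; rewrite block_eq_sum_zero_ext // (bigD1 C) //= addrAC.
- move=> y y' eq_yy'; congr (_ - _); congr (gs C _).
  by apply: eq_restr_zero_ext => i iC; apply: eq_yy'; rewrite inE.
- move=> y y' eq_yy'; apply: eq_bigr => C' /andP[C'L C'C]; congr (gs C' _).
  apply: eq_restr_zero_ext => i iC'; apply: eq_yy'.
  by rewrite !inE (disjointFr (trivIsetP tL _ _ C'L CL C'C) iC').
Qed.

Lemma block_sub_some_block {B} : B \in K -> exists2 C, C \in L & B \subset C.
Proof.
case/andP: partL => /and3P[/eqP covL _ _] _ BK.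
case/andP: partK => _ K0.
have /set0Pn [j jB] : B != set0 by apply: contraNneq K0 => <-.
have : j \in cover L by rewrite covL inE.
case/bigcupP => C CL jC; exists C => //.
by apply: block_sub_meeting => //; apply/pred0Pn; exists j; rewrite /= jB.
Qed.

Lemma block_diff_const {B} : B \in K -> B \in L ->
  exists c : G, forall y : #|B|.-tuple S, fs B y - gs B y = c.
Proof.
case/andP: partL => /and3P[_ tL _] _ BK BL.
exists (\sum_(C in L | C != B) gs C (restr zero_tuple C)
        - \sum_(C in K | C != B) fs C (restr zero_tuple C)) => y.
by rewrite block_eq_sum_zero_ext // sum_restr_zero_ext // addrAC (addrC (gs B y)) addrK.
Qed.

End TwoDecompositions.

Lemma partition_sub_of_decompositions {S : Type} (zero : S) {G : zmodType} {n}
    {f : n.-tuple S -> G} {K L : {set {set 'I_n}}}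
    {fs gs : forall B : {set 'I_n}, #|B|.-tuple S -> G} :
  nonempty_partition K -> nonempty_partition L ->
  (forall B, B \in K -> non_separable (fs B)) ->
  (forall B, B \in L -> non_separable (gs B)) ->
  (forall x, f x = \sum_(B in K) fs B (restr x B)) ->
  (forall x, f x = \sum_(B in L) gs B (restr x B)) ->
  K \subset L.
Proof.
move=> partK partL fsNS gsNS f_fs f_gs; apply/subsetP => B BK.
have [C CL BC] := block_sub_some_block zero partK partL fsNS f_fs f_gs BK.
have [B' B'K CB'] := block_sub_some_block zero partL partK gsNS f_gs f_fs CL.
have BB' := partition_block_sub partK BK B'K (subset_trans BC CB').
by rewrite (_ : B = C) //; apply/eqP; rewrite eqEsubset BC BB'.
Qed.

Theorem lemmaA4 (S : Type) (zero : S) (G : zmodType) (n : nat)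
  (f : n.-tuple S -> G) (K L : {set {set 'I_n}})
  (fs gs : forall B : {set 'I_n}, #|B|.-tuple S -> G) :
  nonempty_partition K -> nonempty_partition L ->
  (forall B, B \in K -> non_separable (fs B)) ->
  (forall B, B \in L -> non_separable (gs B)) ->
  (forall x : n.-tuple S, f x = \sum_(B in K) fs B (restr x B)) ->
  (forall x : n.-tuple S, f x = \sum_(B in L) gs B (restr x B)) ->
  K = L /\
  (forall B, B \in K -> B \in L ->
     exists c : G, forall y : #|B|.-tuple S, fs B y - gs B y = c).
Proof.
move=> partK partL fsNS gsNS f_fs f_gs; split.
  apply/eqP; rewrite eqEsubset.
  by rewrite (partition_sub_of_decompositions zero partK partL fsNS gsNS f_fs f_gs)
             (partition_sub_of_decompositions zero partL partK gsNS fsNS f_gs f_fs).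
by move=> B BK BL; exact: (block_diff_const zero partK partL f_fs f_gs BK BL).
Qed.
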